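(* Let $(X,d)$ be a sequentially right $K$-complete quasi-metric space and $\varphi:X\to\mathbb{R}\cup\{\infty\}$ a proper, bounded below, nearly lower semicontinuous function. Suppose that for every $x\in X$ with $\varphi(x)>\inf\varphi(X)$ there exists $y\in X\setminus\overline{\{x\}}$ such that $\varphi(y)+d(y,x)\le\varphi(x)$. Then there exists $z\in X$ with $\varphi(z)=\inf\varphi(X)$.
   Context: A quasi-metric on $X$ is $d:X\times X\to[0,\infty)$ with $d(x,x)=0$, $d(x,z)\le d(x,y)+d(y,z)$, and $d(x,y)=d(y,x)=0\Rightarrow x=y$ (no symmetry). Topology $\tau_d$: neighbourhood base at $x$ given by $\{y:d(x,y)<r\}$, $r>0$; $x_n\to x$ iff $d(x,x_n)\to0$; $\overline{\{x\}}=\{y:d(y,x)=0\}$. A sequence $(x_n)$ is right $K$-Cauchy if for every $\varepsilon>0$ there is $n_\varepsilon$ with $d(x_{n+k},x_n)<\varepsilon$ for all $n\ge n_\varepsilon$, $k\in\mathbb{N}$; $X$ is sequentially right $K$-complete if every right $K$-Cauchy sequence converges. $\varphi$ is proper if finite somewhere; nearly lower semicontinuous if $\varphi(x)\le\liminf_n\varphi(x_n)$ for every sequence with pairwise distinct terms converging to $x$. *)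

From Stdlib Require Import Reals.
From Coquelicot Require Import Coquelicot.
Open Scope R_scope.

Definition quasi_metric {X : Type} (d : X -> X -> R) : Prop :=
  (forall x y, 0 <= d x y) /\
  (forall x, d x x = 0) /\
  (forall x y z, d x z <= d x y + d y z) /\
  (forall x y, d x y = 0 -> d y x = 0 -> x = y).

(* x_n -> x in tau_d  iff  d(x, x_n) -> 0 *)
Definition qconverges {X : Type} (d : X -> X -> R) (xs : nat -> X) (x : X) : Prop :=
  forall eps, 0 < eps -> exists N, forall n, (N <= n)%nat -> d x (xs n) < eps.

Definition right_K_Cauchy {X : Type} (d : X -> X -> R) (xs : nat -> X) : Prop :=
  forall eps, 0 < eps -> exists N, forall n k, (N <= n)%nat -> (1 <= k)%nat ->
    d (xs (n + k)%nat) (xs n) < eps.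

Definition seq_right_K_complete {X : Type} (d : X -> X -> R) : Prop :=
  forall xs : nat -> X, right_K_Cauchy d xs -> exists x, qconverges d xs x.

(* closure of a singleton in tau_d *)
Definition closure_singleton {X : Type} (d : X -> X -> R) (x : X) : X -> Prop :=
  fun y => d y x = 0.

Definition ext_valued {X : Type} (phi : X -> Rbar) : Prop :=
  forall x, phi x <> m_infty.

Definition proper_fun {X : Type} (phi : X -> Rbar) : Prop :=
  exists x, is_finite (phi x).

Definition bounded_below {X : Type} (phi : X -> Rbar) : Prop :=
  exists m : R, forall x, Rbar_le m (phi x).

(* phi(x) <= liminf phi(x_n), written out: every real c < phi(x) is
   eventually below phi(x_n). *)
Definition le_liminf {X : Type} (phi : X -> Rbar) (xs : nat -> X) (x : X) : Prop :=
  forall c : R, Rbar_lt c (phi x) ->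
    exists N, forall n, (N <= n)%nat -> Rbar_lt c (phi (xs n)).

Definition nearly_lsc {X : Type} (d : X -> X -> R) (phi : X -> Rbar) : Prop :=
  forall (xs : nat -> X) (x : X),
    (forall n m, n <> m -> xs n <> xs m) ->
    qconverges d xs x -> le_liminf phi xs x.

Definition inf_val {X : Type} (phi : X -> Rbar) : Rbar :=
  Rbar_glb (fun r => exists x, phi x = r).

From Stdlib Require Import Reals Lra Lia Classical ClassicalEpsilon.
From Coquelicot Require Import Coquelicot.
Open Scope R_scope.

(* The corollary follows from a weak Ekeland principle: some z admits no
   strict descent, i.e. no y outside the closure of z with
   phi y + d(y, z) <= phi z; at such a z the hypothesis forces phi z = inf phi.
   The principle is proved by Ekeland's construction.  If every finite point
   admitted a strict descent, choose x_(n+1) among the descents of x_n with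
   phi x_(n+1) within 1/(n+1) of their infimum.  The values phi x_n decrease
   strictly to some L and d(x_(n+k), x_n) <= phi x_n - phi x_(n+k), so the
   sequence is right K-Cauchy with pairwise distinct terms; its limit x has
   phi x <= L by near lower semicontinuity.  Descents compose, so a descent y
   of x is a descent of every x_n, whence L <= phi y < phi x <= L. *)

Lemma inf_val_le {X : Type} (phi : X -> Rbar) (x : X) : Rbar_le (inf_val phi) (phi x).
Proof.
  unfold inf_val.
  rewrite <- (Rbar_is_glb_unique (fun r => r = phi x) (phi x)).
  - apply Rbar_glb_subset. intros r ->. eauto.
  - split.
    + intros r ->. apply Rbar_le_refl.
    + intros b Hb. apply Hb. reflexivity.
Qed.

Lemma approx_minimizer {T : Type} (S : T -> Prop) (f : T -> R) (m eps : R) :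
  0 < eps -> (exists x, S x) -> (forall x, S x -> m <= f x) ->
  exists x, S x /\ forall y, S y -> f x <= f y + eps.
Proof.
  intros Heps [x0 Hx0] Hm.
  set (E := fun r => exists y, S y /\ r = - f y).
  destruct (completeness E) as [l [Hub Hl]].
  - exists (- m). intros r [y [Hy ->]]. specialize (Hm y Hy). lra.
  - exists (- f x0). exists x0. auto.
  - destruct (classic (exists y, S y /\ - f y > l - eps)) as [[y [Hy Hyl]]|Hnone].
    + exists y. split; [exact Hy|]. intros z Hz.
      assert (- f z <= l) by (apply Hub; exists z; auto). lra.
    + exfalso. assert (l <= l - eps); [|lra].
      apply Hl. intros r [y [Hy ->]].
      apply Rnot_lt_le. intro. apply Hnone. exists y. split; auto.
Qed.

Lemma le_of_le_plus_inv_succ (a b : R) : (forall n, a <= b + / INR (S n)) -> a <= b.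
Proof.
  intros H. apply Rle_plus_epsilon. intros e He.
  destruct (archimed_cor1 e He) as [[|n] [Hn Hpos]]; [lia|].
  specialize (H n). lra.
Qed.

Lemma strictly_decreasing_injective (a : nat -> R) :
  (forall n, a (S n) < a n) -> forall n m, n <> m -> a n <> a m.
Proof.
  intros Ha.
  assert (Hlt : forall n m, (n < m)%nat -> a m < a n).
  { intros n m Hnm. apply Rle_lt_trans with (a (S n)); [|apply Ha].
    apply decreasing_prop; [intro k; left; apply Ha | exact Hnm]. }
  intros n m Hnm Heq.
  destruct (Nat.lt_gt_cases n m) as [[Hnm'|Hnm'] _]; [exact Hnm| |];
    specialize (Hlt _ _ Hnm'); lra.
Qed.

Lemma has_lb_of_le (a : nat -> R) (m : R) : (forall n, m <= a n) -> has_lb a.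
Proof.
  intros H. exists (- m). intros r [n ->]. unfold opp_seq. specialize (H n). lra.
Qed.

Lemma seq_of_step {X : Type} (P : X -> Prop) (step : nat -> X -> X -> Prop) (x0 : X) :
  P x0 -> (forall n x, P x -> exists y, P y /\ step n x y) ->
  exists xs : nat -> X, forall n, P (xs n) /\ step n (xs n) (xs (S n)).
Proof.
  intros H0 Hstep.
  destruct (choice (fun (p : nat * X) y => P (snd p) -> P y /\ step (fst p) (snd p) y))
    as [next Hnext].
  { intros [n x]. destruct (classic (P x)) as [Hx|Hx].
    - destruct (Hstep n x Hx) as [y Hy]. exists y. auto.
    - exists x. intro. contradiction. }
  set (xs := fix xs n := match n with O => x0 | S k => next (k, xs k) end).
  assert (HP : forall n, P (xs n)).
  { induction n; [exact H0 | apply (Hnext (n, xs n) IHn)]. }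
  exists xs. intro n. split; [apply HP | apply (Hnext (n, xs n) (HP n))].
Qed.

Lemma le_liminf_le {X : Type} (phi : X -> Rbar) (xs : nat -> X) (x : X)
    (a : nat -> R) (L : R) :
  le_liminf phi xs x -> (forall n, phi (xs n) = Finite (a n)) -> Un_cv a L ->
  Rbar_le (phi x) L.
Proof.
  intros Hli Ha Hcv. apply Rbar_not_lt_le. intros HLx.
  assert (Hc : exists c : R, L < c /\ Rbar_lt c (phi x)).
  { destruct (phi x) as [p| |]; simpl in HLx.
    - exists ((L + p) / 2). simpl. lra.
    - exists (L + 1). split; [lra | exact I].
    - contradiction. }
  destruct Hc as [c [HLc Hcx]].
  destruct (Hli c Hcx) as [N1 HN1]. destruct (Hcv (c - L)) as [N2 HN2]; [lra|].
  specialize (HN1 (N1 + N2)%nat ltac:(lia)). specialize (HN2 (N1 + N2)%nat ltac:(lia)).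
  rewrite Ha in HN1. simpl in HN1. unfold R_dist in HN2. apply Rabs_def2 in HN2. lra.
Qed.

Section QuasiMetric.

Variables (X : Type) (d : X -> X -> R).
Hypothesis qm : quasi_metric d.

Lemma quasi_metric_chain_le (xs : nat -> X) (a : nat -> R) :
  (forall n, d (xs (S n)) (xs n) <= a n - a (S n)) ->
  forall n k, d (xs (n + k)%nat) (xs n) <= a n - a (n + k)%nat.
Proof.
  destruct qm as [_ [Hxx [Htri _]]]. intros Hstep n k. induction k.
  - rewrite Nat.add_0_r, Hxx. lra.
  - rewrite Nat.add_succ_r.
    specialize (Htri (xs (S (n + k))) (xs (n + k)%nat) (xs n)).
    specialize (Hstep (n + k)%nat). lra.
Qed.

Lemma right_K_Cauchy_of_chain (xs : nat -> X) (a : nat -> R) (L : R) :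
  (forall n k, d (xs (n + k)%nat) (xs n) <= a n - a (n + k)%nat) ->
  (forall n, L <= a n) -> Un_cv a L -> right_K_Cauchy d xs.
Proof.
  intros Hchain HL Hcv e He. destruct (Hcv e He) as [N HN]. exists N.
  intros n k Hn _. specialize (HN n Hn). unfold R_dist in HN. apply Rabs_def2 in HN.
  specialize (Hchain n k). specialize (HL (n + k)%nat). lra.
Qed.

Lemma qconverges_dist_le (xs : nat -> X) (x : X) (n : nat) (c : R) :
  qconverges d xs x -> (forall k, d (xs (n + k)%nat) (xs n) <= c) -> d x (xs n) <= c.
Proof.
  destruct qm as [_ [_ [Htri _]]]. intros Hx Hc.
  apply Rle_plus_epsilon. intros e He. destruct (Hx e He) as [K HK].
  specialize (HK (n + K)%nat ltac:(lia)). specialize (Htri x (xs (n + K)%nat) (xs n)).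
  specialize (Hc K). lra.
Qed.

End QuasiMetric.

Section Ekeland.

Variables (X : Type) (d : X -> X -> R) (phi : X -> Rbar).
Hypotheses (qm : quasi_metric d) (Hcomp : seq_right_K_complete d)
  (Hext : ext_valued phi) (Hproper : proper_fun phi) (Hbdd : bounded_below phi)
  (Hlsc : nearly_lsc d phi).

Definition strict_descent (x y : X) : Prop :=
  is_finite (phi y) /\ real (phi y) + d y x <= real (phi x) /\ real (phi y) < real (phi x).

Lemma strict_descent_of_le (x y : X) :
  is_finite (phi x) -> ~ closure_singleton d x y ->
  Rbar_le (Rbar_plus (phi y) (d y x)) (phi x) -> strict_descent x y.
Proof.
  unfold closure_singleton, strict_descent. intros Hx Hyx Hle.
  assert (Hpos : 0 < d y x).
  { destruct (proj1 qm y x) as [Hlt|Heq]; [exact Hlt | symmetry in Heq; contradiction]. }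
  rewrite <- Hx in Hle. specialize (Hext y).
  destruct (phi y) as [q| |]; simpl in Hle; try contradiction.
  simpl. split; [reflexivity | split; lra].
Qed.

Lemma strict_descent_trans (x y z : X) :
  strict_descent x y -> d x z <= real (phi z) - real (phi x) -> strict_descent z y.
Proof.
  destruct qm as [Hpos [_ [Htri _]]]. intros [Hy [Hyx Hlt]] Hxz.
  specialize (Htri y x z). specialize (Hpos x z).
  split; [exact Hy | split; lra].
Qed.

Lemma near_optimal_descent_sequence (x0 : X) :
  is_finite (phi x0) -> (forall x, is_finite (phi x) -> exists y, strict_descent x y) ->
  exists xs : nat -> X, forall n,
    is_finite (phi (xs n)) /\ strict_descent (xs n) (xs (S n)) /\
    forall y, strict_descent (xs n) y -> real (phi (xs (S n))) <= real (phi y) + / INR (S n).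
Proof.
  intros Hx0 Hdesc. destruct Hbdd as [m Hm].
  destruct (seq_of_step (fun x => is_finite (phi x))
    (fun n x y => strict_descent x y /\
       forall y', strict_descent x y' -> real (phi y) <= real (phi y') + / INR (S n))
    x0 Hx0) as [xs Hxs].
  - intros n x Hx.
    destruct (approx_minimizer (strict_descent x) (fun y => real (phi y)) m (/ INR (S n)))
      as [y [Hy Hopt]].
    + apply Rinv_0_lt_compat, lt_0_INR. lia.
    + exact (Hdesc x Hx).
    + intros y [Hfin _]. specialize (Hm y). rewrite <- Hfin in Hm. exact Hm.
    + exists y. split; [apply Hy | split; assumption].
  - exists xs. intro n. destruct (Hxs n) as [Hfin [Hd Hopt]]. auto.
Qed.

Lemma no_perpetual_strict_descent :
  ~ (forall x, is_finite (phi x) -> exists y, strict_descent x y).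
Proof.
  intros Hdesc. destruct Hproper as [x0 Hx0].
  destruct (near_optimal_descent_sequence x0 Hx0 Hdesc) as [xs Hxs].
  set (a n := real (phi (xs n))).
  assert (Hfin : forall n, phi (xs n) = Finite (a n)) by (intro n; symmetry; apply Hxs).
  assert (Hdec : forall n, a (S n) < a n) by (intro n; apply Hxs).
  assert (Hstep : forall n, d (xs (S n)) (xs n) <= a n - a (S n)).
  { intro n. destruct (Hxs n) as [_ [[_ [Hle _]] _]]. unfold a. lra. }
  pose proof (quasi_metric_chain_le X d qm xs a Hstep) as Hchain.
  destruct Hbdd as [m Hm].
  assert (Hma : forall n, m <= a n).
  { intro n. specialize (Hm (xs n)). rewrite Hfin in Hm. exact Hm. }
  destruct (decreasing_cv a (fun n => Rlt_le _ _ (Hdec n)) (has_lb_of_le a m Hma)) as [L HL].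
  assert (HLa : forall n, L <= a n).
  { apply decreasing_ineq; [intro n; apply Rlt_le, Hdec | exact HL]. }
  destruct (Hcomp xs (right_K_Cauchy_of_chain X d xs a L Hchain HLa HL)) as [x Hx].
  assert (Hdistinct : forall n k, n <> k -> xs n <> xs k).
  { intros n k Hnk Heq. apply (strictly_decreasing_injective a Hdec n k Hnk).
    unfold a. rewrite Heq. reflexivity. }
  assert (HxL := le_liminf_le phi xs x a L (Hlsc xs x Hdistinct Hx) Hfin HL).
  assert (Hpx : exists p, phi x = Finite p /\ p <= L).
  { specialize (Hext x). destruct (phi x) as [p| |]; simpl in HxL; try contradiction.
    exists p. auto. }
  destruct Hpx as [p [Hpx HpL]].
  destruct (Hdesc x) as [y Hy]; [rewrite Hpx; reflexivity|].
  assert (Hyn : forall n, strict_descent (xs n) y).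
  { intro n. apply (strict_descent_trans x y (xs n) Hy).
    apply (qconverges_dist_le X d qm xs x n); [exact Hx|]. intro k.
    specialize (Hchain n k). specialize (HLa (n + k)%nat).
    rewrite Hpx. unfold a in *. simpl. lra. }
  assert (HLy : L <= real (phi y)).
  { apply le_of_le_plus_inv_succ. intro n.
    destruct (Hxs n) as [_ [_ Hopt]]. specialize (Hopt y (Hyn n)).
    specialize (HLa (S n)). unfold a in *. lra. }
  destruct Hy as [_ [_ Hyx]]. rewrite Hpx in Hyx. simpl in Hyx. lra.
Qed.

Theorem weak_ekeland_principle :
  exists z, is_finite (phi z) /\
    forall y, ~ closure_singleton d z y -> Rbar_lt (phi z) (Rbar_plus (phi y) (d y z)).
Proof.
  apply NNPP. intros Hno. apply no_perpetual_strict_descent.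
  intros x Hx. apply NNPP. intros Hnone. apply Hno.
  exists x. split; [exact Hx|]. intros y Hyx.
  apply Rbar_not_le_lt. intros Hle. apply Hnone.
  exists y. exact (strict_descent_of_le x y Hx Hyx Hle).
Qed.

End Ekeland.

Theorem corollary3p6 (X : Type) (d : X -> X -> R) (phi : X -> Rbar) :
  quasi_metric d ->
  seq_right_K_complete d ->
  ext_valued phi ->
  proper_fun phi ->
  bounded_below phi ->
  nearly_lsc d phi ->
  (forall x, Rbar_lt (inf_val phi) (phi x) ->
     exists y, ~ closure_singleton d x y /\
       Rbar_le (Rbar_plus (phi y) (d y x)) (phi x)) ->
  exists z, phi z = inf_val phi.
Proof.
  intros qm Hcomp Hext Hproper Hbdd Hlsc Hdesc.
  destruct (weak_ekeland_principle X d phi qm Hcomp Hext Hproper Hbdd Hlsc)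
    as [z [_ Hz]].
  exists z.
  destruct (Rbar_le_lt_or_eq_dec _ _ (inf_val_le phi z)) as [Hlt|Heq];
    [|symmetry; exact Heq].
  destruct (Hdesc z Hlt) as [y [Hyz Hle]].
  exfalso. exact (Rbar_lt_not_le _ _ (Hz y Hyz) Hle).
Qed.
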